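(* Let $\mathcal N=\mathbb N^*$, $\Omega=\{x,y\}$, and $U\in\mathbb Q^{\underline\Omega}$ the mould with $U^x=1$, $U^{x^pyx^q}=\frac{(-1)^q}{p!q!}$ ($p,q\in\mathbb N$), $U^{\underline\omega}=0$ otherwise. For $M\in\mathbb Q^{\underline{\mathcal N}}$ define $M\odot U\in\mathbb Q^{\underline\Omega}$ by $(M\odot U)^\emptyset=M^\emptyset$ and, for nonempty $\underline\omega$, $$(M\odot U)^{\underline\omega}=\sum_{s\ge1}\ \sum_{\substack{\underline\omega=\underline\omega^1\cdots\underline\omega^s\\ \underline\omega^1,\dots,\underline\omega^s\ne\emptyset}}M^{r(\underline\omega^1)\cdots r(\underline\omega^s)}U^{\underline\omega^1}\cdots U^{\underline\omega^s},$$ where $r(\underline\omega^1)\cdots r(\underline\omega^s)$ is read as a word of length $s$ over $\mathcal N$. Then for any unital associative algebra $\mathbb A$ over a field of characteristic zero, any $X,Y\in\mathbb A$, and any $M\in\mathbb Q^{\underline{\mathcal N}}$, $$MD=(M\odot U)B,$$ where $D$ is the associative comould generated by $D_n=\frac{t^n}{(n-1)!}\mathrm{ad}_X^{n-1}(X+Y)$ ($n\in\mathcal N$) and $B$ is the associative comould generated by $B_x=tX$, $B_y=tY$.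
   Context: For an alphabet $\mathcal M$, $\underline{\mathcal M}$ is its set of finite words (empty word $\emptyset$, length $r(\cdot)$); a mould is a function $\underline{\mathcal M}\to\mathbb Q$. For a family $(C_m)_{m\in\mathcal M}$ in $\mathbb A[[t]]$, the associative comould is $C_\emptyset=1$, $C_{m_1\cdots m_r}=C_{m_1}\cdots C_{m_r}$, and $MC=\sum_{\underline m}M^{\underline m}C_{\underline m}$ ($t$-adically convergent here). $\mathrm{ad}_AB=AB-BA$. *)

From HB Require Import structures.
From mathcomp Require Import all_boot all_order all_algebra.
Set Implicit Arguments. Unset Strict Implicit. Unset Printing Implicit Defensive.
Import Order.TTheory GRing.Theory Num.Theory.
Local Open Scope ring_scope.

(* ---------- formal power series A[[t]] as coefficient sequences ---------- *)
Section Series.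
Variable A : nzRingType.

Definition smul (f g : nat -> A) : nat -> A :=
  fun n => \sum_(i < n.+1) f i * g (n - i)%N.

Definition sone : nat -> A := fun n => if n is 0%N then 1 else 0.

Definition comould (T : Type) (C : T -> nat -> A) (w : seq T) : nat -> A :=
  foldr (fun m acc => smul (C m) acc) sone w.
End Series.

(* t-adically convergent mould/comould contraction:
   mc_sum_is M C S  <->  S = sum_w M^w C_w, the family (M^w C_w)_w being
   summable in the t-adic topology: for each degree N only finitely many
   words contribute to the coefficient of t^N, and that coefficient of S is
   the (finite) sum of their contributions. *)
Definition mc_sum_is (F : fieldType) (A : lalgType F) (T : eqType)
  (M : seq T -> rat) (C : T -> nat -> A) (S : nat -> A) : Prop :=
  forall N : nat, exists s : seq (seq T),
    [/\ uniq s,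
        (forall w, w \notin s -> (ratr (M w) : F) *: comould C w N = 0)
      & S N = \sum_(w <- s) (ratr (M w) : F) *: comould C w N].

Definition Npos := {n : nat | (0 < n)%N}.
Definition Npos1 : Npos := exist _ 1%N isT.

Inductive Om := Ox | Oy.
Definition Om_eqb (a b : Om) : bool :=
  match a, b with Ox, Ox | Oy, Oy => true | _, _ => false end.
Lemma Om_eqP : Equality.axiom Om_eqb.
Proof. by case; case; constructor. Qed.
HB.instance Definition _ := hasDecEq.Build Om Om_eqP.

Definition Umould (w : seq Om) : rat :=
  if w == [:: Ox] then 1 else
  let p := index Oy w in
  let q := (size w - p.+1)%N in
  if w == nseq p Ox ++ Oy :: nseq q Ox
  then (-1) ^+ q / ((p`!)%:R * (q`!)%:R)
  else 0.

(* decompositions of a word into nonempty consecutive factors w = w^1 ... w^s *)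
Fixpoint splits (T : Type) (w : seq T) : seq (seq (seq T)) :=
  match w with
  | [::] => [:: [::]]
  | a :: w' => flatten [seq (match d with
                             | [::] => [:: [:: [:: a]]]
                             | f :: d' => [:: [:: a] :: d; (a :: f) :: d']
                             end) | d <- splits w']
  end.

Definition rpos (T : Type) (u : seq T) : Npos := insubd Npos1 (size u).

Definition odot (M : seq Npos -> rat) (U : seq Om -> rat) (w : seq Om) : rat :=
  if w is [::] then M [::]
  else \sum_(d <- splits w) M (map (@rpos Om) d) * \prod_(u <- d) U u.

Definition adX (A : nzRingType) (X Z : A) : A := X * Z - Z * X.

Definition Dgen (F : fieldType) (A : lalgType F) (X Y : A) (n : Npos) : nat -> A :=
  fun k => if k == val n
           then (((val n).-1)`!%:R : F)^-1 *: iter (val n).-1 (adX X) (X + Y)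
           else 0.

Definition Bgen (A : nzRingType) (X Y : A) (o : Om) : nat -> A :=
  fun k => if k == 1%N then (match o with Ox => X | Oy => Y end) else 0.

From HB Require Import structures.
From mathcomp Require Import all_boot all_order all_algebra.
From mathcomp Require Import ring zify.
Set Implicit Arguments.
Unset Strict Implicit.
Unset Printing Implicit Defensive.
Import GRing.Theory.
Local Open Scope ring_scope.

(* Writing ad_X = L_X + R_(-X) with commuting L_X, R_(-X), the binomial
   theorem gives ad_X^(n-1)(X + Y) = (n-1)! sum_(p+q=n-1) U^(x^p y x^q) X^p Y X^q
   for n >= 2, so that D_n = sum_(|u| = n) U^u B_u for every n. Substituting
   this into M D and expanding the products, the coefficient of t^N becomes a
   sum over words n_1...n_s with n_1 + ... + n_s = N and words u^i of length
   n_i; these data are exactly the factorizations u^1 ... u^s of the words of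
   length N into nonempty factors, and regrouping by the product word gives
   (M (.) U)^w B_w. *)

Lemma uniq_flatten_map (S U : eqType) (f : S -> seq U) (g : U -> S) (s : seq S) :
  uniq s -> {in s, forall x, uniq (f x)} ->
  {in s, forall x, {in f x, forall y, g y = x}} -> uniq (flatten (map f s)).
Proof.
elim: s => //= x s IHs /andP[xNs uniq_s] uniq_f gK.
rewrite cat_uniq uniq_f ?mem_head //= IHs //; last 2 first.
- by move=> z zs; apply: uniq_f; rewrite inE zs orbT.
- by move=> z zs; apply: gK; rewrite inE zs orbT.
rewrite andbT; apply/hasPn => y /flatten_mapP[z zs yz]; apply: contra xNs => yx.
by rewrite -(gK x (mem_head _ _) y yx) (gK z _ y yz) // inE zs orbT.
Qed.

Section Words.
Variable T : eqType.
Implicit Types (s w : seq T) (d : seq (seq T)).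

Fixpoint words s n : seq (seq T) :=
  if n is n'.+1 then [seq a :: u | a <- s, u <- words s n'] else [:: [::]].

Lemma mem_words s n w : (w \in words s n) = (size w == n) && all (mem s) w.
Proof.
elim: n w => [|n IHn] w; first by case: w.
apply/allpairsP/idP => [[[a u] /= [as_ uw ->]]|].
  by move: uw; rewrite IHn /= eqSS as_.
case: w => [|a w] //=; rewrite eqSS => /andP[sw /andP[as_ ws]].
by exists (a, w); rewrite IHn sw ws.
Qed.

Lemma words_uniq s n : uniq s -> uniq (words s n).
Proof.
move=> uniq_s; elim: n => //= n IHn.
by apply: allpairs_uniq => // -[a u] [b v] _ _ /= [-> ->].
Qed.

Definition words_of_sizes s (ns : seq nat) : seq (seq (seq T)) :=
  foldr (fun n ds => [seq u :: d | u <- words s n, d <- ds]) [:: [::]] ns.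

Lemma mem_words_of_sizes s ns d :
  (d \in words_of_sizes s ns) = (map size d == ns) && all (all (mem s)) d.
Proof.
elim: ns d => [|n ns IHns] d; first by case: d.
apply/allpairsP/idP => [[[u e] /= [uw ed ->]]|].
  move: uw ed; rewrite mem_words IHns /= => /andP[/eqP-> ->] /andP[/eqP-> ->].
  by rewrite eqxx.
case: d => [|u d] //=; rewrite eqseq_cons -andbA => /and4P[su sd us ds].
by exists (u, d); rewrite mem_words IHns su sd us ds.
Qed.

Lemma words_of_sizes_uniq s ns : uniq s -> uniq (words_of_sizes s ns).
Proof.
move=> uniq_s; elim: ns => //= n ns IHns.
by apply: allpairs_uniq; rewrite ?words_uniq // => -[u d] [v e] _ _ /= [-> ->].
Qed.

Lemma big_words_of_sizes (R : pzSemiRingType) s ns (G : seq T -> R) :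
  \sum_(d <- words_of_sizes s ns) \prod_(u <- d) G u =
  \prod_(n <- ns) \sum_(u <- words s n) G u.
Proof.
elim: ns => [|n ns IHns]; first by rewrite /= big_seq1 !big_nil.
rewrite big_allpairs_dep big_cons -IHns mulr_suml; apply: eq_bigr => u _.
by rewrite mulr_sumr; apply: eq_bigr => d _; rewrite big_cons.
Qed.

Lemma mem_splits w d :
  (d \in splits w) = (flatten d == w) && all (predC1 [::]) d.
Proof.
elim: w d => [|a w IHw] d /=.
  by case: d => [|[|x u] d]; rewrite inE //= andbF.
apply/flatten_mapP/idP => [[e eS de]|].
  move: eS; rewrite IHw => /andP[/eqP <- ne_e].
  case: e ne_e de => [|f e] /=.
    by rewrite inE => _ /eqP ->; rewrite /= eqxx.
  case/andP=> f0 ne_e; rewrite !inE => /orP[] /eqP -> /=; rewrite eqxx //=.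
  by apply/andP.
case: d => [|[|b u] d] //=; first by rewrite andbF.
rewrite eqseq_cons => /andP[/andP[/eqP <- /eqP flat_d] ne_d].
exists (if u is [::] then d else u :: d).
  by rewrite IHw; case: u flat_d => [|c u] /= ->; rewrite eqxx ?ne_d.
clear flat_d; case: u => [|c u]; last by rewrite !inE eqxx orbT.
by case: d {ne_d} => [|f d]; rewrite !inE eqxx.
Qed.

Lemma splits_uniq w : uniq (splits w).
Proof.
elim: w => //= a w IHw.
pose drop_first_letter d :=
  if d is u :: e then (if behead u is [::] then e else behead u :: e) else [::].
apply: (@uniq_flatten_map _ _ _ drop_first_letter) => // [[|f e]|[|f e]] //.
- rewrite mem_splits /= => /and3P[_ f0 _]; rewrite inE andbT.
  by apply: contra f0 => /eqP[<-].
- by move=> _ d; rewrite inE => /eqP ->.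
- rewrite mem_splits /= => /and3P[_ f0 _] d.
  by rewrite !inE => /orP[] /eqP -> //=; case: f f0.
Qed.
End Words.

Section SumTheory.
Variable V : nmodType.

Lemma big_partition_seq (I J : eqType) (r : seq I) (s : seq J) (k : I -> J)
    (G : I -> V) :
  uniq s -> {in r, forall i, k i \in s} ->
  \sum_(i <- r) G i = \sum_(j <- s) \sum_(i <- r | k i == j) G i.
Proof.
move=> uniq_s kr; rewrite (exchange_big_dep predT) //=; apply: eq_big_seq => i ir.
rewrite (big_rem (k i)) ?kr //= eqxx big1_seq ?addr0 // => j /andP[/eqP kij].
by rewrite mem_rem_uniq // inE kij eqxx.
Qed.

Lemma big_seq_support (I : eqType) (r l : seq I) (h : I -> V) :
    uniq r -> uniq l -> {subset l <= r} ->
    {in r, forall i, i \notin l -> h i = 0} ->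
  \sum_(i <- r) h i = \sum_(i <- l) h i.
Proof.
move=> uniq_r uniq_l lr h0.
rewrite -(@big_rmcond_in _ _ _ _ r (fun i => i \in l)) // -big_filter.
apply: perm_big; apply: uniq_perm; rewrite ?filter_uniq // => i.
by rewrite mem_filter andb_idr //; apply: lr.
Qed.

Lemma iter_addf_binomial (f g : {additive V -> V}) :
    (forall v, f (g v) = g (f v)) ->
  forall n v, iter n (fun v => f v + g v) v =
    \sum_(i < n.+1) iter (n - i) f (iter i g v) *+ 'C(n, i).
Proof.
move=> fg n v; elim: n => [|n IHn]; first by rewrite big_ord1.
have g_iter m u : g (iter m f u) = iter m f (g u).
  by elim: m => //= m IHm; rewrite -fg IHm.
set d := fun i => iter (n.+1 - i) f (iter i g v).
transitivity (\sum_(i < n.+2) d i *+ 'C(n.+1, i)); last by [].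
rewrite [LHS]/= IHn !raddf_sum.
rewrite (eq_bigr (fun i : 'I_n.+1 => d i *+ 'C(n, i))); last first.
  by move=> i _; rewrite raddfMn /d subSn // -ltnS.
rewrite [X in _ + X](eq_bigr (fun i : 'I_n.+1 => d i.+1 *+ 'C(n, i))); last first.
  by move=> i _; rewrite raddfMn g_iter.
have shift : \sum_(i < n.+1) d i *+ 'C(n, i) =
    d 0%N + \sum_(i < n.+1) d i.+1 *+ 'C(n, i.+1).
  rewrite big_ord_recl [X in _ = _ + X]big_ord_recr /=.
  by rewrite (bin_small (ltnSn n)) mulr0n addr0 bin0 mulr1n.
rewrite shift [RHS]big_ord_recl bin0 mulr1n -addrA -big_split.
by apply: congr2 => //; apply: eq_bigr => i _; rewrite lift0 binS mulrnDr.
Qed.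

Lemma iter_raddfD (f : {additive V -> V}) n :
  {morph iter n f : a b / a + b}.
Proof. by elim: n => //= n IHn a b; rewrite /= IHn raddfD. Qed.

Lemma iter_raddf0 (f : {additive V -> V}) n : iter n f 0 = 0.
Proof. by elim: n => //= n ->; rewrite raddf0. Qed.
End SumTheory.

(* rat.v proves that ratr is a ring morphism only into numFieldTypes;
   characteristic zero is enough. *)
Section RatEmbedding.
Variables (F : fieldType) (F0 : [pchar F] =i pred0).

Lemma intr_pchar0_eq0 (z : int) : (z%:~R == 0 :> F) = (z == 0).
Proof.
have natF0 := (GRing.pcharf0P F).1 F0.
by case: z => n; rewrite ?NegzE ?rmorphN ?oppr_eq0 /= natF0.
Qed.

Lemma ratr_frac (a b : int) : b != 0 ->
  ratr (a%:~R / b%:~R : rat) = a%:~R / b%:~R :> F.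
Proof.
move=> b0; set r : rat := _ / _.
have cross : numq r * b = a * denq r.
  apply: (@intr_inj rat); rewrite !rmorphM /= numqE /r.
  by field; rewrite intr_eq0 ?b0 ?denq_neq0.
apply/eqP; rewrite /ratr eqr_div ?intr_pchar0_eq0 ?denq_neq0 //.
by rewrite -!rmorphM /= cross.
Qed.

Lemma ratr_sign_frac (i m : nat) : (0 < m)%N ->
  ratr ((-1) ^+ i / m%:R : rat) = (-1) ^+ i / m%:R :> F.
Proof.
move=> m_gt0; have := @ratr_frac ((-1) ^+ i) m.
by rewrite !rmorphXn !rmorphN1 -lt0n; apply.
Qed.

Let denq_neq0F (x : rat) : (denq x)%:~R != 0 :> F.
Proof. by rewrite intr_pchar0_eq0 denq_neq0. Qed.

Lemma ratrD_pchar0 : {morph @ratr F : x y / x + y}.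
Proof.
move=> x y; have -> : x + y =
    (numq x * denq y + numq y * denq x)%:~R / (denq x * denq y)%:~R.
  by rewrite rmorphD !rmorphM /= !numqE; field; rewrite !intr_eq0 !denq_neq0.
rewrite ratr_frac ?mulf_neq0 ?denq_neq0 // /ratr rmorphD !rmorphM /=.
by field; rewrite !denq_neq0F.
Qed.

Lemma ratrM_pchar0 : {morph @ratr F : x y / x * y}.
Proof.
move=> x y; have -> : x * y = (numq x * numq y)%:~R / (denq x * denq y)%:~R.
  by rewrite !rmorphM /= !numqE; field; rewrite !intr_eq0 !denq_neq0.
rewrite ratr_frac ?mulf_neq0 ?denq_neq0 // /ratr !rmorphM /=.
by field; rewrite !denq_neq0F.
Qed.

Lemma ratr0 : ratr 0 = 0 :> F. Proof. by rewrite /ratr mul0r. Qed.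
Lemma ratr1 : ratr 1 = 1 :> F. Proof. by rewrite /ratr divr1. Qed.

Lemma ratr_sum_pchar0 (I : Type) (r : seq I) (f : I -> rat) :
  ratr (\sum_(i <- r) f i) = \sum_(i <- r) ratr (f i) :> F.
Proof. exact: (big_morph _ ratrD_pchar0 ratr0). Qed.

Lemma ratr_prod_pchar0 (I : Type) (r : seq I) (f : I -> rat) :
  ratr (\prod_(i <- r) f i) = \prod_(i <- r) ratr (f i) :> F.
Proof. exact: (big_morph _ ratrM_pchar0 ratr1). Qed.
End RatEmbedding.

Section MonomialComoulds.
Variable A : nzRingType.

Lemma smul_monomial (f g : nat -> A) (a : nat) (c : A) :
    (forall k, f k = if k == a then c else 0) ->
  forall N, smul f g N = if (a <= N)%N then c * g (N - a)%N else 0.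
Proof.
move=> fE N; rewrite /smul.
under eq_bigr => i _ do rewrite fE (fun_if (fun x => x * _)) mul0r.
by rewrite -big_mkcond /= (big_ord1_eq _ (fun j => c * g (N - j)%N)) ltnS.
Qed.

Lemma comould_monomial (T : Type) (C : T -> nat -> A) (deg : T -> nat)
    (coef : T -> A) :
    (forall m k, C m k = if k == deg m then coef m else 0) ->
  forall w N, comould C w N =
    if N == sumn (map deg w) then \prod_(m <- w) coef m else 0.
Proof.
move=> CE; elim=> [|m w IHw] N /=; first by rewrite big_nil; case: N.
rewrite (smul_monomial _ (CE m)) big_cons; case: leqP => [le_mN|lt_Nm].
  by rewrite IHw -(eqn_add2l (deg m)) subnKC //; case: eqP; rewrite ?mulr0.
by rewrite ifF //; apply/negbTE; rewrite neq_ltn (leq_trans lt_Nm) ?leq_addr.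
Qed.
End MonomialComoulds.

Definition Om_letters := [:: Ox; Oy].

Lemma all_Om_letters (u : seq Om) : all (mem Om_letters) u.
Proof. by apply/allP => -[]. Qed.

Lemma mem_Om_words n u : (u \in words Om_letters n) = (size u == n).
Proof. by rewrite mem_words all_Om_letters andbT. Qed.

Lemma mem_Om_words_of_sizes ns d :
  (d \in words_of_sizes Om_letters ns) = (map size d == ns).
Proof.
have all_d : all (all (mem Om_letters)) d.
  by apply/allP => u _; apply: all_Om_letters.
by rewrite mem_words_of_sizes all_d andbT.
Qed.

Definition xyx p q : seq Om := nseq p Ox ++ Oy :: nseq q Ox.

Lemma size_xyx p q : size (xyx p q) = (p + q.+1)%N.
Proof. by rewrite size_cat /= !size_nseq. Qed.

Lemma index_xyx p q : index Oy (xyx p q) = p.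
Proof. by rewrite index_cat mem_nseq andbF /= size_nseq addn0. Qed.

Lemma xyx_exponent p q : (size (xyx p q) - (index Oy (xyx p q)).+1)%N = q.
Proof. by rewrite size_xyx index_xyx addnS subSS addKn. Qed.

Lemma Umould_xyx p q : Umould (xyx p q) = (-1) ^+ q / ((p`!)%:R * (q`!)%:R).
Proof.
have y_in : Oy \in xyx p q by rewrite mem_cat mem_head orbT.
rewrite /Umould ifF ?xyx_exponent ?index_xyx ?eqxx //.
by apply: contraTF y_in => /eqP ->.
Qed.

Lemma Umould_eq0 u : u != [:: Ox] -> (forall p q, u != xyx p q) -> Umould u = 0.
Proof. by move=> /negbTE ux uN; rewrite /Umould ux (negbTE (uN _ _)). Qed.

Lemma sum_words_xyx (V : nmodType) k (G : seq Om -> V) :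
    (forall u, Umould u = 0 -> G u = 0) ->
  \sum_(u <- words Om_letters k.+2) G u = \sum_(q < k.+2) G (xyx (k.+1 - q) q).
Proof.
move=> G0; rewrite -[RHS](big_mkord xpredT (fun q => G (xyx (k.+1 - q) q))).
rewrite -(big_map (fun q => xyx (k.+1 - q) q) xpredT).
apply: big_seq_support; first exact: words_uniq.
- rewrite map_inj_in_uniq ?iota_uniq // => p q _ _.
  move=> /(congr1 (fun u => size u - (index Oy u).+1)%N).
  by rewrite !xyx_exponent.
- move=> _ /mapP[q q_in ->]; rewrite mem_Om_words size_xyx.
  by move: q_in; rewrite mem_index_iota; lia.
- move=> u; rewrite mem_Om_words => /eqP size_u uN; apply/G0/Umould_eq0.
    by apply/eqP => uE; move: size_u; rewrite uE.
  move=> p q; apply: contraNneq uN => uE; apply/mapP; exists q.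
    by rewrite mem_index_iota; move: size_u; rewrite uE size_xyx; lia.
  by rewrite uE; congr xyx; move: size_u; rewrite uE size_xyx; lia.
Qed.

Definition key (d : seq (seq Om)) : seq Npos := map (@rpos Om) d.

Definition factorizations N := flatten [seq splits w | w <- words Om_letters N].

Definition compositions N := undup (map key (factorizations N)).

Lemma mem_factorizations N d :
  (d \in factorizations N) = (size (flatten d) == N) && all (predC1 [::]) d.
Proof.
apply/flatten_mapP/idP => [[w] | /andP[size_d ne_d]].
  by rewrite mem_Om_words mem_splits => /eqP <- /andP[/eqP -> ->]; rewrite eqxx.
by exists (flatten d); rewrite ?mem_Om_words ?mem_splits ?eqxx.
Qed.

Lemma factorizations_uniq N : uniq (factorizations N).
Proof.
apply: (@uniq_flatten_map _ _ _ flatten); first exact: words_uniq.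
  by move=> w _; apply: splits_uniq.
by move=> w _ d; rewrite mem_splits => /andP[/eqP].
Qed.

Lemma val_key d : all (predC1 [::]) d -> map val (key d) = map size d.
Proof.
elim: d => //= u d IHd /andP[u_ne ne_d].
by rewrite IHd // val_insubd lt0n size_eq0 u_ne.
Qed.

Lemma sumn_compositions N w : w \in compositions N -> sumn (map val w) = N.
Proof.
rewrite mem_undup => /mapP[d].
rewrite mem_factorizations => /andP[/eqP <- ne_d] ->.
by rewrite val_key // size_flatten.
Qed.

Lemma compositions_complete N w : sumn (map val w) = N -> w \in compositions N.
Proof.
move=> sum_w; set d := [seq nseq (val n) Ox | n <- w].
have size_d : map size d = map val w.
  by rewrite -map_comp; apply: eq_map => n /=; rewrite size_nseq.
have ne_d : all (predC1 [::]) d.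
  by apply/allP => _ /mapP[n _ ->] /=; rewrite -size_eq0 size_nseq -lt0n (valP n).
rewrite mem_undup; apply/mapP; exists d.
  by rewrite mem_factorizations ne_d size_flatten /shape size_d sum_w eqxx.
by apply: (inj_map val_inj); rewrite val_key.
Qed.

Lemma factorizations_of_composition N w : w \in compositions N ->
  perm_eq [seq d <- factorizations N | key d == w]
          (words_of_sizes Om_letters (map val w)).
Proof.
move=> wN; apply: uniq_perm; rewrite ?filter_uniq ?factorizations_uniq //.
  by apply: words_of_sizes_uniq.
move=> d; rewrite mem_filter mem_factorizations mem_Om_words_of_sizes.
apply/idP/idP => [/and3P[/eqP <- _ ne_d] | /eqP size_d]; first by rewrite val_key.
have ne_d : all (predC1 [::]) d.
  apply/allP => u ud /=; rewrite -size_eq0 -lt0n.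
  have /mapP[n _ ->] : size u \in map val w by rewrite -size_d map_f.
  exact: valP.
rewrite ne_d andbT size_flatten /shape size_d (sumn_compositions wN) eqxx andbT.
by rewrite -(inj_eq (inj_map val_inj)) val_key // size_d.
Qed.

Lemma odot_splits (M : seq Npos -> rat) (U : seq Om -> rat) w :
  odot M U w = \sum_(d <- splits w) M (key d) * \prod_(u <- d) U u.
Proof. by case: w => [|a w] //; rewrite big_seq1 big_nil mulr1. Qed.

Section Expansion.
Variables (F : fieldType) (F0 : [pchar F] =i pred0) (A : algType F) (X Y : A).

Definition letter (o : Om) : A := if o is Ox then X else Y.
Definition Xword (u : seq Om) : A := \prod_(o <- u) letter o.

Lemma Xword_cat u v : Xword (u ++ v) = Xword u * Xword v.
Proof. exact: big_cat. Qed.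

Lemma Xword_flatten d : Xword (flatten d) = \prod_(u <- d) Xword u.
Proof.
elim: d => [|u d IHd]; first by rewrite big_nil; apply: big_nil.
by rewrite big_cons -IHd -Xword_cat.
Qed.

Lemma Xword_xyx p q : Xword (xyx p q) = X ^+ p * Y * X ^+ q.
Proof.
have Xword_nseq m : Xword (nseq m Ox) = X ^+ m.
  elim: m => [|m IHm]; first exact: big_nil.
  by rewrite /Xword big_cons -/(Xword _) IHm exprS.
by rewrite Xword_cat /Xword big_cons -!/(Xword _) !Xword_nseq mulrA.
Qed.

Lemma comould_Bgen u N :
  comould (Bgen X Y) u N = if N == size u then Xword u else 0.
Proof.
rewrite (@comould_monomial _ _ _ (fun _ => 1%N) letter); last by case.
by congr (if N == _ then _ else _); elim: u => //= o u ->.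
Qed.

Definition Dcoef (n : nat) : A :=
  ((n.-1)`!%:R : F)^-1 *: iter n.-1 (adX X) (X + Y).

Lemma comould_Dgen w N : comould (Dgen X Y) w N =
  if N == sumn (map val w) then \prod_(n <- w) Dcoef (val n) else 0.
Proof. exact: comould_monomial. Qed.

Fact adX_is_zmod_morphism : zmod_morphism (adX X).
Proof. by move=> a b; rewrite /adX mulrBr mulrBl !opprD !opprK addrACA. Qed.
HB.instance Definition _ :=
  GRing.isZmodMorphism.Build A A (adX X) adX_is_zmod_morphism.

Lemma iter_adX_Y k : iter k (adX X) Y =
  \sum_(i < k.+1) (X ^+ (k - i) * Y * (- X) ^+ i) *+ 'C(k, i).
Proof.
pose lX := GRing.mull_fun X idfun; pose rX := GRing.mulr_fun (- X) idfun.
have iter_lX m v : iter m lX v = X ^+ m * v.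
  by elim: m => [|m IHm]; rewrite ?mul1r //= IHm exprS -mulrA.
have iter_rX m v : iter m rX v = v * (- X) ^+ m.
  by elim: m => [|m IHm]; rewrite ?mulr1 //= IHm exprSr mulrA.
rewrite (eq_iter (f' := fun v => lX v + rX v)); last first.
  by move=> v; rewrite /adX /lX /rX /= mulrN.
rewrite (@iter_addf_binomial _ lX rX) => [|v]; last by rewrite /= mulrA.
by apply: eq_bigr => i _; rewrite iter_lX iter_rX mulrA.
Qed.

Lemma iter_adX_X k : iter k.+1 (adX X) X = 0.
Proof. by rewrite iterSr {2}/adX subrr iter_raddf0. Qed.

Lemma Dcoef_words n : (0 < n)%N ->
  Dcoef n = \sum_(u <- words Om_letters n) ratr (Umould u) *: Xword u.
Proof.
rewrite /Dcoef; case: n => [|[|k]] // _.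
  have Ux : Umould [:: Ox] = 1 by [].
  have Uy : Umould [:: Oy] = 1 by rewrite (Umould_xyx 0 0).
  rewrite /= !big_cons big_nil addr0 /Xword !big_cons !big_nil !mulr1 Ux Uy.
  by rewrite ratr1 invr1 !scale1r.
rewrite iter_raddfD iter_adX_X add0r iter_adX_Y scaler_sumr.
rewrite sum_words_xyx => [|u ->]; last by rewrite ratr0 scale0r.
have natF_eq0 := (GRing.pcharf0P F).1 F0.
apply: eq_bigr => i _; rewrite Umould_xyx Xword_xyx -natrM.
rewrite (ratr_sign_frac F0) ?muln_gt0 ?fact_gt0 //.
rewrite -scaleN1r exprZn -scaler_nat -scalerAr !scalerA; congr (_ *: _).
have le_ik : (i <= k.+1)%N by rewrite -ltnS.
rewrite -(bin_fact le_ik) !natrM; field.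
by rewrite !natF_eq0 -!lt0n bin_gt0 le_ik !fact_gt0.
Qed.

Variable M : seq Npos -> rat.

Definition odot_series N : A :=
  \sum_(w <- words Om_letters N) ratr (odot M Umould w) *: Xword w.

Lemma mc_sum_Bgen : mc_sum_is (odot M Umould) (Bgen X Y) odot_series.
Proof.
move=> N; exists (words Om_letters N); split; first exact: words_uniq.
  move=> w; rewrite mem_Om_words comould_Bgen eq_sym => /negbTE ->.
  by rewrite scaler0.
by apply: eq_big_seq => w; rewrite mem_Om_words comould_Bgen eq_sym => ->.
Qed.

Lemma odot_series_factorizations N : odot_series N =
  \sum_(d <- factorizations N)
     ratr (M (key d)) *: \prod_(u <- d) (ratr (Umould u) *: Xword u).
Proof.
rewrite /odot_series big_flatten big_map; apply: eq_bigr => w _.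
rewrite odot_splits (ratr_sum_pchar0 F0) scaler_suml; apply: eq_big_seq => d.
rewrite mem_splits => /andP[/eqP <- _].
rewrite (ratrM_pchar0 F0) -scalerA scaler_prod (ratr_prod_pchar0 F0).
by rewrite Xword_flatten.
Qed.

Lemma mc_sum_Dgen : mc_sum_is M (Dgen X Y) odot_series.
Proof.
move=> N; exists (compositions N); split; first exact: undup_uniq.
  move=> w wN; rewrite comould_Dgen ifN ?scaler0 //.
  by apply: contra wN => /eqP/esym; apply: compositions_complete.
rewrite odot_series_factorizations.
rewrite (big_partition_seq (s := compositions N) (k := key)) ?undup_uniq //;
  last by move=> d dN; rewrite mem_undup map_f.
apply: eq_big_seq => w wN; rewrite comould_Dgen (sumn_compositions wN) eqxx.
pose term d := \prod_(u <- d) (ratr (Umould u) *: Xword u).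
rewrite (eq_bigr (fun d => ratr (M w) *: term d)); last by move=> d /eqP ->.
rewrite -scaler_sumr -[in LHS]big_filter.
rewrite (perm_big _ (factorizations_of_composition wN)).
rewrite big_words_of_sizes big_map; congr (_ *: _); apply: eq_bigr => n _.
by rewrite Dcoef_words //; apply: valP.
Qed.
End Expansion.

Theorem theorem5p1 (F : fieldType) (hF : [pchar F] =i pred0)
  (A : algType F) (X Y : A) (M : seq Npos -> rat) :
  exists S : nat -> A,
    mc_sum_is M (Dgen X Y) S /\ mc_sum_is (odot M Umould) (Bgen X Y) S.
Proof.
exists (odot_series X Y M).
by split; [exact: (mc_sum_Dgen hF X Y M) | exact: mc_sum_Bgen].
Qed.
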